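(* Let $\Omega\subset\mathbb{C}$ be a domain and let $H$ be a continuous, nowhere-vanishing function of $(\mu,\mathcal{A},\mathcal{B})\in\mathbb{D}\times\mathbb{C}\times\mathbb{C}$ (where $\mathbb{D}$ is the open unit disk). For $D=(\mu,\mathcal{A},\mathcal{B},\mathcal{F})\in\mathcal{BV}(\Omega)$ set $\Theta_{F,D}:=\frac{|\mathcal{F}|^2}{H(\mu,\mathcal{A},\mathcal{B})}\,dx\,dy$. Then $\Theta_F$ is not gauge-invariant: there is no such $H$ for which $\Theta_{F,\phi\cdot D}=\Theta_{F,D}$ holds for all gauges $\phi$ on $\Omega$ and all $D\in\mathcal{BV}(\Omega)$ with $\mathcal{F}\not\equiv0$.
   Context: $\mathcal{BV}(\Omega)$ is the set of quadruples $(\mu,\mathcal{A},\mathcal{B},\mathcal{F})$ of continuous complex functions on the domain $\Omega$ with $|\mu|<1$ pointwise (encoding $w_{\bar z}-\mu w_z+\mathcal{A}w+\mathcal{B}\bar w=\mathcal{F}$). A gauge is a $C^1$ nowhere-vanishing complex function $\phi$ on $\Omega$, acting by $\phi\cdot(\mu,\mathcal{A},\mathcal{B},\mathcal{F})=(\mu,\ \mathcal{A}-\phi_{\bar z}/\phi+\mu\phi_z/\phi,\ \mathcal{B}\phi/\bar\phi,\ \phi\mathcal{F})$. *)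

From Stdlib Require Import Reals.
From Coquelicot Require Import Coquelicot.
Open Scope R_scope.

Definition connected_set (O : C -> Prop) : Prop :=
  forall U V : C -> Prop, open U -> open V ->
    (forall z, O z -> U z \/ V z) ->
    (forall z, O z -> U z -> V z -> False) ->
    (exists z, O z /\ U z) -> (exists z, O z /\ V z) -> False.

Definition is_domain (O : C -> Prop) : Prop :=
  (exists z, O z) /\ open O /\ connected_set O.

Definition dRe_x (f : C -> C) (z : C) : R :=
  Derive (fun t => Re (f (Re z + t, Im z))) 0.
Definition dIm_x (f : C -> C) (z : C) : R :=
  Derive (fun t => Im (f (Re z + t, Im z))) 0.
Definition dRe_y (f : C -> C) (z : C) : R :=
  Derive (fun t => Re (f (Re z, Im z + t))) 0.
Definition dIm_y (f : C -> C) (z : C) : R :=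
  Derive (fun t => Im (f (Re z, Im z + t))) 0.

Definition dx (f : C -> C) (z : C) : C := (dRe_x f z, dIm_x f z).
Definition dy (f : C -> C) (z : C) : C := (dRe_y f z, dIm_y f z).

Definition dz (f : C -> C) (z : C) : C :=
  Cmult (RtoC (/2)) (Cminus (dx f z) (Cmult Ci (dy f z))).
Definition dzbar (f : C -> C) (z : C) : C :=
  Cmult (RtoC (/2)) (Cplus (dx f z) (Cmult Ci (dy f z))).

Definition C1_on (O : C -> Prop) (f : C -> C) : Prop :=
  forall z, O z ->
    continuous f z /\
    ex_derive (fun t => Re (f (Re z + t, Im z))) 0 /\
    ex_derive (fun t => Im (f (Re z + t, Im z))) 0 /\
    ex_derive (fun t => Re (f (Re z, Im z + t))) 0 /\
    ex_derive (fun t => Im (f (Re z, Im z + t))) 0 /\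
    continuous (dRe_x f) z /\ continuous (dIm_x f) z /\
    continuous (dRe_y f) z /\ continuous (dIm_y f) z.

Definition gauge (O : C -> Prop) (phi : C -> C) : Prop :=
  C1_on O phi /\ (forall z, O z -> phi z <> RtoC 0).

(** Quadruples (mu, A, B, F); only their values on O matter. *)
Record BVdata := mkBV {
  bv_mu : C -> C; bv_A : C -> C; bv_B : C -> C; bv_F : C -> C }.

Definition in_BV (O : C -> Prop) (D : BVdata) : Prop :=
  forall z, O z ->
    continuous (bv_mu D) z /\ continuous (bv_A D) z /\
    continuous (bv_B D) z /\ continuous (bv_F D) z /\
    Cmod (bv_mu D z) < 1.

Definition gauge_act (phi : C -> C) (D : BVdata) : BVdata :=
  mkBV (bv_mu D)
    (fun z => Cplus (Cminus (bv_A D z) (Cdiv (dzbar phi z) (phi z)))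
                    (Cdiv (Cmult (bv_mu D z) (dz phi z)) (phi z)))
    (fun z => Cmult (bv_B D z) (Cdiv (phi z) (Cconj (phi z))))
    (fun z => Cmult (phi z) (bv_F D z)).

Definition Theta_density (H : C * C * C -> C) (D : BVdata) (z : C) : C :=
  Cdiv (RtoC (Cmod (bv_F D z) ^ 2)) (H (bv_mu D z, bv_A D z, bv_B D z)).

(** A nonzero real constant [r] is a gauge under which [mu], [A] and [B] are
    unchanged (its Wirtinger derivatives vanish and [r / conj r = 1]) while
    [F] becomes [r F]. Hence [Theta_{F, r.D} = r^2 Theta_{F, D}], and taking
    [D = (0, 0, 0, 1)] and [r = 2] forces [4 / H(0,0,0) = 1 / H(0,0,0)], which
    is impossible as [H] does not vanish. *)

From Stdlib Require Import Reals Lra.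
From Coquelicot Require Import Coquelicot.
Open Scope R_scope.

Lemma dx_const (c z : C) : dx (fun _ => c) z = RtoC 0.
Proof. unfold dx, dRe_x, dIm_x; now rewrite !Derive_const. Qed.

Lemma dy_const (c z : C) : dy (fun _ => c) z = RtoC 0.
Proof. unfold dy, dRe_y, dIm_y; now rewrite !Derive_const. Qed.

Lemma dz_const (c z : C) : dz (fun _ => c) z = RtoC 0.
Proof. unfold dz; rewrite dx_const, dy_const; field. Qed.

Lemma dzbar_const (c z : C) : dzbar (fun _ => c) z = RtoC 0.
Proof. unfold dzbar; rewrite dx_const, dy_const; field. Qed.

Lemma C1_on_const (O : C -> Prop) (c : C) : C1_on O (fun _ => c).
Proof.
  intros z _.
  repeat split; try apply ex_derive_const;
    (apply continuous_const ||
     (eapply continuous_ext; [intro; symmetry; apply Derive_const | apply continuous_const])).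
Qed.

Lemma gauge_const (O : C -> Prop) (c : C) : c <> RtoC 0 -> gauge O (fun _ => c).
Proof. intro Hc; split; [apply C1_on_const | easy]. Qed.

Lemma Cconj_RtoC (r : R) : Cconj (RtoC r) = RtoC r.
Proof. apply injective_projections; simpl; ring. Qed.

Lemma Theta_density_gauge_act_real_const (H : C * C * C -> C) (D : BVdata)
    (r : R) (z : C) :
  r <> 0 ->
  Theta_density H (gauge_act (fun _ => RtoC r) D) z
  = Cmult (RtoC (r ^ 2)) (Theta_density H D z).
Proof.
  intro Hr.
  assert (Hr' : RtoC r <> RtoC 0) by (intro E; apply Hr; now injection E).
  unfold Theta_density, gauge_act; cbn [bv_mu bv_A bv_B bv_F].
  rewrite dz_const, dzbar_const, Cconj_RtoC.
  replace (Cplus (Cminus (bv_A D z) (Cdiv (RtoC 0) (RtoC r)))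
                 (Cdiv (Cmult (bv_mu D z) (RtoC 0)) (RtoC r)))
    with (bv_A D z) by (field; exact Hr').
  replace (Cmult (bv_B D z) (Cdiv (RtoC r) (RtoC r))) with (bv_B D z)
    by (field; exact Hr').
  rewrite Cmod_mult, Cmod_R, Rpow_mult_distr, pow2_abs, RtoC_mult.
  unfold Cdiv; ring.
Qed.

Lemma Theta_density_neq_0 (H : C * C * C -> C) (D : BVdata) (z : C) :
  H (bv_mu D z, bv_A D z, bv_B D z) <> RtoC 0 -> bv_F D z <> RtoC 0 ->
  Theta_density H D z <> RtoC 0.
Proof.
  intros HH HF.
  apply Cmod_gt_0; unfold Theta_density.
  rewrite Cmod_div, Cmod_R, Rabs_pos_eq by (exact HH || apply pow2_ge_0).
  apply Rdiv_lt_0_compat; [apply pow_lt|]; apply Cmod_gt_0; assumption.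
Qed.

Lemma Cmult_RtoC_fixed (s : R) (t : C) :
  s <> 1 -> Cmult (RtoC s) t = t -> t = RtoC 0.
Proof.
  intros Hs E; destruct t as [a b].
  unfold Cmult in E; simpl in E; injection E as Ea Eb.
  unfold RtoC; f_equal; apply (Rmult_eq_reg_l (s - 1)); lra.
Qed.

Theorem lemma8p4 (O : C -> Prop) (HO : is_domain O) :
  ~ exists H : C * C * C -> C,
      (forall p : C * C * C, Cmod (fst (fst p)) < 1 -> continuous H p) /\
      (forall p : C * C * C, Cmod (fst (fst p)) < 1 -> H p <> RtoC 0) /\
      (forall (phi : C -> C) (D : BVdata),
          gauge O phi -> in_BV O D ->
          (exists z, O z /\ bv_F D z <> RtoC 0) ->
          forall z, O z ->
            Theta_density H (gauge_act phi D) z = Theta_density H D z).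
Proof.
  intros [H [_ [H_neq_0 Htheta]]].
  destruct HO as [[z0 Hz0] _].
  set (D := mkBV (fun _ => RtoC 0) (fun _ => RtoC 0) (fun _ => RtoC 0) (fun _ => RtoC 1)).
  assert (HF : bv_F D z0 <> RtoC 0) by (intro E; injection E; lra).
  assert (HD : in_BV O D).
  { intros z _; repeat split; try apply continuous_const.
    cbn; rewrite Cmod_0; lra. }
  assert (H2 : RtoC 2 <> RtoC 0) by (intro E; injection E; lra).
  pose proof (Htheta _ D (gauge_const O _ H2) HD (ex_intro _ z0 (conj Hz0 HF)) z0 Hz0)
    as Hinv.
  rewrite Theta_density_gauge_act_real_const in Hinv by lra.
  apply (Theta_density_neq_0 H D z0); [| exact HF |].
  - apply H_neq_0; cbn; rewrite Cmod_0; lra.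
  - apply (Cmult_RtoC_fixed (2 ^ 2)); [lra | exact Hinv].
Qed.
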